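(* Let $X\in\mathbb{R}^{N\times d}$ have rows ${\bm{x}}_1^\top,\dots,{\bm{x}}_N^\top$, let $Y\in\mathbb{R}^N$, $\mathbf{B}_0\in\mathbb{R}^{h\times d}$, ${\bm{v}}_0\in\mathbb{R}^h$, ${\bm{q}}_0=X\mathbf{B}_0^\top{\bm{v}}_0$, ${\bm{b}}_0=\mathrm{vec}(\mathbf{B}_0)$, and let $\nabla_{{\bm{b}}}{\bm{q}}_0\in\mathbb{R}^{N\times hd}$ be the Jacobian whose $n$-th row is $\mathrm{vec}({\bm{v}}_0{\bm{x}}_n^\top)^\top$. Let $\mathcal{K}_0=X(\mathbf{B}_0^\top\mathbf{B}_0+\|{\bm{v}}_0\|_2^2 I_{d\times d})X^\top$, assumed invertible, and let $C_1=\mathcal{K}_0^{-1}$. Define $\mathbf{B}_t$ by ${\bm{b}}_t=\mathrm{vec}(\mathbf{B}_t)={\bm{b}}_0-(\nabla_{{\bm{b}}}{\bm{q}}_0)^\top\mathcal{K}_0^{-1}({\bm{q}}_0-Y)$. Then $\mathrm{tr}(\mathbf{B}_0^\top\mathbf{B}_t)={\bm{b}}_0^\top{\bm{b}}_0-{\bm{q}}_0^\top C_1({\bm{q}}_0-Y)$, and, regarding this expression as a function of ${\bm{q}}_0\in\mathbb{R}^N$ with ${\bm{b}}_0^\top{\bm{b}}_0$ and $C_1$ held fixed, ${\bm{q}}_0^*=\tfrac12 Y$ is a maximum of $\mathrm{tr}(\mathbf{B}_0^\top\mathbf{B}_t)$.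
   Context: Setting: overparameterized two-layer linear regression with loss $\frac12\|X\mathbf{B}^\top{\bm{v}}-Y\|_2^2$, backbone $\mathbf{B}\in\mathbb{R}^{h\times d}$ and linear head ${\bm{v}}\in\mathbb{R}^h$; $\mathbf{B}_0,{\bm{v}}_0$ are the parameters at the start of finetuning and ${\bm{b}}_t$ is the converged backbone obtained from the neural tangent kernel (linearized) approximation of gradient-descent training, with $\mathcal{K}_0$ the empirical NTK on $X$. $\mathrm{vec}$ denotes column-stacking vectorization. *)

From mathcomp Require Import all_boot all_order all_algebra.
Set Implicit Arguments. Unset Strict Implicit. Unset Printing Implicit Defensive.
Import Order.TTheory GRing.Theory Num.Theory.
Local Open Scope ring_scope.

(* Column-stacking vectorization of an m x n matrix: entry A i j sits at
   position j*m + i.  MathComp's [mxvec] is row-major, so vec A is the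
   (transposed) row-major vectorization of A^T. *)
Definition vec (R : Type) (m n : nat) (A : 'M[R]_(m, n)) : 'cV[R]_(n * m) :=
  (mxvec A^T)^T.

Section NTK.
Variables (R : comRingType) (N d h : nat).
Variables (X : 'M[R]_(N, d)) (B0 : 'M[R]_(h, d)) (v0 : 'cV[R]_h).

Definition q0 : 'cV[R]_N := X *m B0^T *m v0.

Definition jac : 'M[R]_(N, d * h) :=
  \matrix_(n < N) (vec (v0 *m row n X))^T.

Definition sqnorm (k : nat) (v : 'cV[R]_k) : R := \sum_i v i 0 ^+ 2.

Definition K0 : 'M[R]_N :=
  X *m (B0^T *m B0 + (sqnorm v0)%:M) *m X^T.
End NTK.

(* The Jacobian maps vec B to X B^T v0, so via the trace pairing
   tr (B0^T Bt) = <vec B0, vec Bt> the update rule gives the first identity.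
   For symmetric C, completing the square gives
   q^T C (q - Y) = (q - Y/2)^T C (q - Y/2) - (Y/2)^T C (Y/2), which is minimal
   at q = Y/2 once C is positive semidefinite; C1 is, as the inverse of the
   symmetric positive semidefinite kernel K0 = X (B0^T B0 + |v0|^2 I) X^T. *)
From mathcomp Require Import all_boot all_order all_algebra.
From mathcomp Require Import ring.
Set Implicit Arguments. Unset Strict Implicit. Unset Printing Implicit Defensive.
Import Order.TTheory GRing.Theory Num.Theory.
Local Open Scope ring_scope.

Lemma vec_dot_sum (R : comPzRingType) m n (A B : 'M[R]_(m, n)) :
  ((vec A)^T *m vec B) 0 0 = \sum_i \sum_j A i j * B i j.
Proof.
rewrite /vec !trmxK mxE (reindex _ (curry_mxvec_bij _ _)) /=.
rewrite exchange_big pair_bigA /=; apply: eq_bigr => [[j i]] _ /=.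
by rewrite !mxE !mxvecE !mxE.
Qed.

Lemma mxtrace_trmx_mul (R : comPzRingType) m n (A B : 'M[R]_(m, n)) :
  \tr (A^T *m B) = ((vec A)^T *m vec B) 0 0.
Proof.
rewrite vec_dot_sum /mxtrace exchange_big /=; apply: eq_bigr => j _.
by rewrite mxE; apply: eq_bigr => i _; rewrite mxE.
Qed.

Lemma jac_mul_vec (R : comNzRingType) N d h
    (X : 'M[R]_(N, d)) (B : 'M[R]_(h, d)) (v : 'cV[R]_h) :
  jac X v *m vec B = q0 X B v.
Proof.
apply/matrixP => n k; rewrite [k]ord1.
transitivity ((row n (jac X v *m vec B)) 0 0); first by rewrite [RHS]mxE.
rewrite row_mul rowK vec_dot_sum mxE.
apply: eq_bigr => i _; rewrite mxE mulr_suml; apply: eq_bigr => j _.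
by rewrite !mxE big_ord1 !mxE; ring.
Qed.

Lemma trmx11 (R : Type) (A : 'M[R]_1) : A^T = A.
Proof. by apply/matrixP => i j; rewrite mxE !ord1. Qed.

Section QuadraticForm.
Variables (R : comPzRingType) (n : nat) (C : 'M[R]_n).
Hypothesis symC : C^T = C.

Lemma quad_form_symmetric (x y : 'cV[R]_n) : x^T *m C *m y = y^T *m C *m x.
Proof. by rewrite -[LHS]trmx11 !trmx_mul trmxK symC mulmxA. Qed.

Lemma quad_form_complete_square (a q : 'cV[R]_n) :
  q^T *m C *m (q - (a + a)) = (q - a)^T *m C *m (q - a) - a^T *m C *m a.
Proof.
suff sqE z : (z + a)^T *m C *m (z - a) = z^T *m C *m z - a^T *m C *m a.
  by rewrite -sqE subrK opprD addrA.
rewrite [(z + a)^T]linearD /= mulmxDl mulmxBr !mulmxDl.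
by rewrite [a^T *m C *m z]quad_form_symmetric opprD addrA addrK.
Qed.

End QuadraticForm.

Definition psdmx (R : numDomainType) n (A : 'M[R]_n) :=
  forall z : 'cV[R]_n, 0 <= (z^T *m A *m z) 0 0.

Section PositiveSemidefinite.
Variable R : realDomainType.

Lemma trmx_mul_self_ge0 n (u : 'cV[R]_n) : 0 <= (u^T *m u) 0 0.
Proof. by rewrite mxE; apply: sumr_ge0 => i _; rewrite mxE -expr2 sqr_ge0. Qed.

Lemma psdmx_gram m n (B : 'M[R]_(m, n)) : psdmx (B^T *m B).
Proof.
move=> z; have -> : z^T *m (B^T *m B) *m z = (B *m z)^T *m (B *m z).
  by rewrite trmx_mul !mulmxA.
exact: trmx_mul_self_ge0.
Qed.

Lemma psdmx_scalar n (s : R) : 0 <= s -> psdmx (s%:M : 'M_n).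
Proof.
move=> s_ge0 z; rewrite mul_mx_scalar -scalemxAl mxE mulr_ge0 //.
exact: trmx_mul_self_ge0.
Qed.

Lemma psdmxD n (A B : 'M[R]_n) : psdmx A -> psdmx B -> psdmx (A + B).
Proof. by move=> psdA psdB z; rewrite mulmxDr mulmxDl mxE addr_ge0. Qed.

Lemma psdmx_congr m n (X : 'M[R]_(m, n)) (A : 'M[R]_n) :
  psdmx A -> psdmx (X *m A *m X^T).
Proof.
move=> psdA z.
have -> : z^T *m (X *m A *m X^T) *m z = (X^T *m z)^T *m A *m (X^T *m z).
  by rewrite trmx_mul trmxK !mulmxA.
exact: psdA.
Qed.

End PositiveSemidefinite.

Lemma psdmx_invmx (R : numDomainType) n (A : 'M[R]_n) :
  A^T = A -> A \in unitmx -> psdmx A -> psdmx (invmx A).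
Proof.
move=> symA unitA psdA z; set w := invmx A *m z.
have -> : z = A *m w by rewrite /w mulmxA mulmxV // mul1mx.
by rewrite trmx_mul symA -!mulmxA mulKmx // mulmxA.
Qed.

Lemma psdmx_quad_form_min (R : numDomainType) n (C : 'M[R]_n) (a q : 'cV[R]_n) :
  C^T = C -> psdmx C ->
  (a^T *m C *m (a - (a + a))) 0 0 <= (q^T *m C *m (q - (a + a))) 0 0.
Proof.
move=> symC psdC; rewrite !quad_form_complete_square // subrr mulmx0.
by rewrite [X in X <= _]mxE [X in _ <= X]mxE lerD2r mxE.
Qed.

Section NTK.
Variables (R : realDomainType) (N d h : nat).
Variables (X : 'M[R]_(N, d)) (B0 : 'M[R]_(h, d)) (v0 : 'cV[R]_h).

Lemma K0_sym : (K0 X B0 v0)^T = K0 X B0 v0.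
Proof.
by rewrite /K0 !trmx_mul trmxK linearD /= trmx_mul trmxK tr_scalar_mx mulmxA.
Qed.

Lemma K0_psd : psdmx (K0 X B0 v0).
Proof.
apply/psdmx_congr/psdmxD; first exact: psdmx_gram.
by apply: psdmx_scalar; apply: sumr_ge0 => i _; rewrite sqr_ge0.
Qed.

End NTK.

Theorem lemma2 (R : realFieldType) (N d h : nat)
  (X : 'M[R]_(N, d)) (Y : 'cV[R]_N) (B0 : 'M[R]_(h, d)) (v0 : 'cV[R]_h)
  (Bt : 'M[R]_(h, d)) :
  K0 X B0 v0 \in unitmx ->
  vec Bt = vec B0 - (jac X v0)^T *m invmx (K0 X B0 v0) *m (q0 X B0 v0 - Y) ->
  let C1 := invmx (K0 X B0 v0) in
  let b0 := vec B0 in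
  let f := fun q : 'cV[R]_N => (b0^T *m b0) 0 0 - (q^T *m C1 *m (q - Y)) 0 0 in
  \tr (B0^T *m Bt) = f (q0 X B0 v0) /\
  (forall q : 'cV[R]_N, f q <= f ((2^-1) *: Y)).
Proof.
move=> unitK defBt C1 b0 f; split.
  rewrite mxtrace_trmx_mul defBt mulmxBr /f /b0 /C1 mxE [X in _ + X]mxE.
  congr (_ - _).
  by rewrite !mulmxA -trmx_mul jac_mul_vec.
have symC1 : C1^T = C1 by rewrite trmx_inv K0_sym.
have psdC1 : psdmx C1 := psdmx_invmx (K0_sym X B0 v0) unitK (K0_psd X B0 v0).
set a := 2^-1 *: Y; have defY : Y = a + a.
  by rewrite /a -scalerDl -[2^-1]mul1r -splitr scale1r.
by move=> q; rewrite /f lerD2l lerN2 defY psdmx_quad_form_min.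
Qed.
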